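(* Fix $\alpha\ge0$ and set $\mathsf{INR}=\mathsf{SNR}^\alpha$. Assume that for all sufficiently large $\mathsf{SNR}$ the equation $$2\mathsf{SNR}^{\frac{3\alpha+1}{2}}\rho^4+\mathsf{SNR}^{\alpha}\rho^3-4\left(\mathsf{SNR}^{\frac{3\alpha+1}{2}}+\mathsf{SNR}^{\frac{\alpha+1}{2}}\right)\rho^2-(2+\mathsf{SNR}+2\mathsf{SNR}^\alpha)\rho+2\left(\mathsf{SNR}^{\frac{3\alpha+1}{2}}+\mathsf{SNR}^{\frac{\alpha+1}{2}}\right)=0$$ has a unique solution $\rho^*=\rho^*(\mathsf{SNR})\in(0,1)$, and define $$R_{\mathsf{sym}}(\mathsf{SNR})=\log\left(\frac{1+\mathsf{SNR}+\mathsf{SNR}^\alpha+2\rho^*\mathsf{SNR}^{\frac{\alpha+1}{2}}}{1+(1-\rho^{*2})\mathsf{SNR}^\alpha}\right).$$ Then $\lim_{\mathsf{SNR}\to\infty}R_{\mathsf{sym}}(\mathsf{SNR})/\log\mathsf{SNR}=\underline{d}(\alpha)$, where $\underline{d}(\alpha)=1-\alpha$ for $0\le\alpha<\frac13$, $\underline{d}(\alpha)=\frac{3-\alpha}{4}$ for $\frac13\le\alpha<1$, and $\underline{d}(\alpha)=\frac{1+\alpha}{4}$ for $\alpha\ge1$.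
   Context: $R_{\mathsf{sym}}(\mathsf{SNR})$ is the symmetric rate of Kramer's feedback scheme for the symmetric two-user Gaussian interference channel with feedback, with $\mathsf{SNR}$ the direct-link and $\mathsf{INR}$ the cross-link signal-to-noise ratio. Logarithms base 2. *)

From Stdlib Require Import Reals.
Open Scope R_scope.

Definition log2 (x : R) : R := ln x / ln 2.

(* the quartic whose root in (0,1) is rho* ; INR = SNR^alpha *)
Definition kramer_poly (alpha S rho : R) : R :=
  2 * Rpower S ((3 * alpha + 1) / 2) * rho ^ 4
  + Rpower S alpha * rho ^ 3
  - 4 * (Rpower S ((3 * alpha + 1) / 2) + Rpower S ((alpha + 1) / 2)) * rho ^ 2
  - (2 + S + 2 * Rpower S alpha) * rho
  + 2 * (Rpower S ((3 * alpha + 1) / 2) + Rpower S ((alpha + 1) / 2)).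

(* symmetric rate of Kramer's scheme, given rho = rho*(SNR) *)
Definition R_sym (alpha S rho : R) : R :=
  log2 ((1 + S + Rpower S alpha + 2 * rho * Rpower S ((alpha + 1) / 2))
        / (1 + (1 - rho ^ 2) * Rpower S alpha)).

Definition d_low (alpha : R) : R :=
  if Rlt_dec alpha (1/3) then 1 - alpha
  else if Rlt_dec alpha 1 then (3 - alpha) / 4
  else (1 + alpha) / 4.

(* Write A = S^((3a+1)/2), B = S^((a+1)/2), C = S^a and u = 1 - rho^2.  The root equation
   reads 2 A u^2 = 2 B (2 rho^2 - 1) + (2 + S + 2C) rho - C rho^3, so A u^2 is at most of
   order S + C, and at least of that order unless u >= 1/2: u is comparable to
   min(1, sqrt((S + C) / A)).  Hence, up to absolute constant factors, the numerator of
   the rate is max(S, C) and the denominator 1 + u C is a power S^t with t read off the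
   regime of a; their quotient is within a constant factor of S^(d a), and a constant
   factor is invisible once the logarithm is divided by log S. *)

From Stdlib Require Import Reals Lra Psatz.
Open Scope R_scope.

Definition within_factor (c x y : R) : Prop := y / c <= x <= c * y.

Lemma within_factor_div c n d p t : 0 < c -> 0 < p -> 0 < t ->
  within_factor c n p -> within_factor c d t -> within_factor (c * c) (n / d) (p / t).
Proof.
  intros Hc Hp Ht [Hn1 Hn2] [Hd1 Hd2].
  assert (Htc : 0 < t / c) by (apply Rdiv_lt_0_compat; lra).
  assert (Hpc : 0 < p / c) by (apply Rdiv_lt_0_compat; lra).
  split.
  - replace (p / t / (c * c)) with (p / c * / (c * t)) by (field; lra).
    apply Rmult_le_compat; try lra.
    + left; apply Rinv_0_lt_compat; nra.
    + apply Rinv_le_contravar; lra.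
  - replace (c * c * (p / t)) with (c * p * / (t / c)) by (field; lra).
    apply Rmult_le_compat; try lra.
    + left; apply Rinv_0_lt_compat; lra.
    + apply Rinv_le_contravar; lra.
Qed.

Lemma ln_le x y : 0 < x -> x <= y -> ln x <= ln y.
Proof. intros Hx [Hxy | <-]; [left; apply ln_increasing |]; lra. Qed.

Lemma within_factor_ln c x y : 0 < c -> 0 < y ->
  within_factor c x y -> Rabs (ln x - ln y) <= ln c.
Proof.
  intros Hc Hy [Hlo Hhi].
  assert (Hyc : 0 < y / c) by (apply Rdiv_lt_0_compat; lra).
  apply ln_le in Hhi; [|lra]. apply ln_le in Hlo; [|lra].
  unfold Rdiv in Hlo. rewrite ln_mult, ln_Rinv in Hlo by (try apply Rinv_0_lt_compat; lra).
  rewrite ln_mult in Hhi by lra.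
  apply Rabs_le; lra.
Qed.

Definition quartic (A B C S r : R) : R :=
  2 * A * r ^ 4 + C * r ^ 3 - 4 * (A + B) * r ^ 2 - (2 + S + 2 * C) * r + 2 * (A + B).

Lemma quartic_root_gap A B C S r : 0 < B -> 0 < C -> 0 < S -> 0 < r < 1 ->
  quartic A B C S r = 0 ->
  2 * A * (1 - r ^ 2) ^ 2 <= 2 * B + 2 + S + 2 * C /\
  (1 / 2 <= 1 - r ^ 2 \/ S + C <= 4 * A * (1 - r ^ 2) ^ 2).
Proof.
  intros HB HC HS Hr Hroot.
  assert (Hgap : 2 * A * (1 - r ^ 2) ^ 2 = 2 * B * (2 * r ^ 2 - 1) + (2 + S + 2 * C) * r - C * r ^ 3)
    by (rewrite <- (Rminus_0_r (2 * A * _)), <- Hroot; unfold quartic; ring).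
  assert (Hr3 : 0 < r ^ 3 <= r) by (split; [apply pow_lt|]; nra).
  assert (Hr2 : 0 < r ^ 2 < 1) by (split; [apply pow_lt|]; nra).
  split; [nra|].
  destruct (Rle_dec (1 / 2) (1 - r ^ 2)) as [Hu | Hu]; [left; exact Hu | right].
  assert (1 / 2 < r) by nra.
  nra.
Qed.

Lemma one_add_mul_within A C T K u : 0 < A -> 1 <= T <= C -> 0 < u <= 1 -> 0 < K ->
  2 * A * u ^ 2 <= 7 * K -> (1 / 2 <= u \/ K <= 4 * A * u ^ 2) -> K * C ^ 2 = T ^ 2 * A ->
  within_factor 5 (1 + u * C) T.
Proof.
  intros HA HT Hu HK Hup Hlow Hscale.
  assert (HuC : 0 <= u * C) by nra.
  assert (Hsq : K * (u * C) ^ 2 = A * u ^ 2 * T ^ 2).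
  { replace (K * (u * C) ^ 2) with (u ^ 2 * (K * C ^ 2)) by ring. rewrite Hscale. ring. }
  assert (Hhalf : T / 2 <= u * C).
  { destruct Hlow as [Hu2 | Hu2]; [nra|].
    assert (T ^ 2 <= 4 * (u * C) ^ 2).
    { apply (Rmult_le_reg_l K); [lra|]. nra. }
    nra. }
  assert (Htwice : u * C <= 2 * T).
  { assert ((u * C) ^ 2 <= 4 * T ^ 2).
    { apply (Rmult_le_reg_l K); [lra|]. nra. }
    nra. }
  split; lra.
Qed.

Lemma quartic_ratio_within A B C S r P T K :
  0 < A -> 0 < B -> 1 <= C -> 1 < S -> 0 < r < 1 -> quartic A B C S r = 0 ->
  S <= P -> C <= P -> B <= P -> P <= S + C ->
  1 <= T <= C -> 0 < K <= S + C -> Rmin (2 * A) (2 * B + 2 + S + 2 * C) <= 7 * K ->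
  K * C ^ 2 = T ^ 2 * A ->
  within_factor 25 ((1 + S + C + 2 * r * B) / (1 + (1 - r ^ 2) * C)) (P / T).
Proof.
  intros HA HB HC HS Hr Hroot HSP HCP HBP HPSC HT HK H7K Hscale.
  (* The two upper bounds on 2 A u^2 feed the hypothesis on K; the scaling makes u C
     comparable to C sqrt (K / A) = T. *)
  destruct (quartic_root_gap A B C S r) as [Hup Hlow]; try lra.
  replace 25 with (5 * 5) by ring.
  apply within_factor_div; try lra.
  - split; nra.
  - assert (0 < r ^ 2 < 1) by (split; [apply pow_lt|]; nra).
    apply (one_add_mul_within A C T K); try lra.
    apply Rle_trans with (2 := H7K), Rmin_glb; [|exact Hup].
    assert ((1 - r ^ 2) ^ 2 <= 1) by nra. nra.
Qed.

Lemma Rpower_gt_0 x y : 0 < Rpower x y.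
Proof. apply exp_pos. Qed.

Lemma Rpower_ge_1 x y : 1 <= x -> 0 <= y -> 1 <= Rpower x y.
Proof. intros Hx Hy. rewrite <- (Rpower_O x) by lra. apply Rle_Rpower; lra. Qed.

Lemma Rpower_div x y z : Rpower x y / Rpower x z = Rpower x (y - z).
Proof. unfold Rdiv, Rminus. rewrite <- Rpower_Ropp, Rpower_plus. reflexivity. Qed.

Lemma Rpower_sqr x y : Rpower x y ^ 2 = Rpower x (2 * y).
Proof. replace (2 * y) with (y + y) by ring. rewrite Rpower_plus. ring. Qed.

Lemma Rpower_le_base x y : 1 <= x -> y <= 1 -> Rpower x y <= x.
Proof.
  intros Hx Hy. apply Rle_trans with (Rpower x 1); [apply Rle_Rpower; lra|].
  rewrite Rpower_1; lra.
Qed.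

Lemma Rpower_ge_base x y : 1 <= x -> 1 <= y -> x <= Rpower x y.
Proof.
  intros Hx Hy. apply Rle_trans with (Rpower x 1); [rewrite Rpower_1; lra|].
  apply Rle_Rpower; lra.
Qed.

Definition kramer_ratio (a S r : R) : R :=
  (1 + S + Rpower S a + 2 * r * Rpower S ((a + 1) / 2)) / (1 + (1 - r ^ 2) * Rpower S a).

(* [kramer_poly a S r] is, by unfolding, [quartic A B C S r] for the A, B, C below. *)
Section KramerRegimes.

Variables (a S r : R).
Hypotheses (Ha : 0 <= a) (HS : 1 < S) (Hr : 0 < r < 1) (Hroot : kramer_poly a S r = 0).

Let A := Rpower S ((3 * a + 1) / 2).
Let B := Rpower S ((a + 1) / 2).
Let C := Rpower S a.

Let HSpow : Rpower S 1 = S.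
Proof. apply Rpower_1; lra. Qed.

Let HA : 0 < A. Proof. apply Rpower_gt_0. Qed.
Let HB : 0 < B. Proof. apply Rpower_gt_0. Qed.
Let HC : 1 <= C. Proof. apply Rpower_ge_1; lra. Qed.

Lemma kramer_ratio_low : a < 1 / 3 -> within_factor 25 (kramer_ratio a S r) (Rpower S (1 - a)).
Proof.
  intros Ha3. rewrite <- Rpower_div, HSpow.
  assert (HAS : A <= S) by (apply Rpower_le_base; lra).
  assert (HBS : B <= S) by (apply Rpower_le_base; lra).
  assert (HCS : C <= S) by (apply Rpower_le_base; lra).
  apply (quartic_ratio_within A B C S r S C A); try exact Hroot; try lra.
  apply Rle_trans with (1 := Rmin_l _ _); lra.
Qed.

Lemma kramer_ratio_mid : 1 / 3 <= a < 1 ->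
  within_factor 25 (kramer_ratio a S r) (Rpower S ((3 - a) / 4)).
Proof.
  intros Ha3. replace ((3 - a) / 4) with (1 - (a + 1) / 4) by field.
  rewrite <- Rpower_div, HSpow.
  assert (HBS : B <= S) by (apply Rpower_le_base; lra).
  assert (HCS : C <= S) by (apply Rpower_le_base; lra).
  assert (HT : 1 <= Rpower S ((a + 1) / 4)) by (apply Rpower_ge_1; lra).
  assert (HTC : Rpower S ((a + 1) / 4) <= C) by (apply Rle_Rpower; lra).
  apply (quartic_ratio_within A B C S r S _ S); try exact Hroot; try lra.
  - apply Rle_trans with (1 := Rmin_r _ _); lra.
  - unfold A, C. rewrite !Rpower_sqr. rewrite <- HSpow at 1.
    rewrite <- !Rpower_plus. f_equal. field.
Qed.

Lemma kramer_ratio_high : 1 <= a ->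
  within_factor 25 (kramer_ratio a S r) (Rpower S ((1 + a) / 4)).
Proof.
  intros Ha1. replace ((1 + a) / 4) with (a - (3 * a - 1) / 4) by field.
  rewrite <- Rpower_div.
  assert (HSC : S <= C) by (apply Rpower_ge_base; lra).
  assert (HBC : B <= C) by (apply Rle_Rpower; lra).
  assert (HT : 1 <= Rpower S ((3 * a - 1) / 4)) by (apply Rpower_ge_1; lra).
  assert (HTC : Rpower S ((3 * a - 1) / 4) <= C) by (apply Rle_Rpower; lra).
  apply (quartic_ratio_within A B C S r C _ C); try exact Hroot; try lra.
  - apply Rle_trans with (1 := Rmin_r _ _); lra.
  - unfold A, C. rewrite !Rpower_sqr, <- !Rpower_plus. f_equal. field.
Qed.

Lemma kramer_ratio_within : within_factor 25 (kramer_ratio a S r) (Rpower S (d_low a)).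
Proof.
  unfold d_low. destruct (Rlt_dec a (1 / 3)); [apply kramer_ratio_low; lra|].
  destruct (Rlt_dec a 1); [apply kramer_ratio_mid | apply kramer_ratio_high]; lra.
Qed.

End KramerRegimes.

Lemma ln_ratio_cvg (f : R -> R) (c d : R) : 0 < c ->
  (exists S0, forall S, S > S0 -> within_factor c (f S) (Rpower S d)) ->
  forall eps, eps > 0 -> exists M, forall S, S > M -> Rabs (ln (f S) / ln S - d) < eps.
Proof.
  intros Hc [S0 HS0] eps Heps.
  exists (Rmax S0 (Rmax 1 (exp (ln c / eps)))).
  intros S HS. apply Rmax_Rlt in HS as [HSS0 HS]. apply Rmax_Rlt in HS as [HS1 HSc].
  assert (HL : 0 < ln S) by (rewrite <- ln_1; apply ln_increasing; lra).
  assert (HLc : ln c < eps * ln S).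
  { apply ln_increasing in HSc; [|apply exp_pos]. rewrite ln_exp in HSc.
    apply (Rmult_lt_compat_l eps) in HSc; [|lra].
    replace (eps * (ln c / eps)) with (ln c) in HSc by (field; lra). exact HSc. }
  assert (Hf := within_factor_ln _ _ _ Hc (exp_pos _) (HS0 S HSS0)).
  unfold Rpower in Hf. rewrite ln_exp in Hf.
  replace (ln (f S) / ln S - d) with ((ln (f S) - d * ln S) / ln S) by (field; lra).
  unfold Rdiv. rewrite Rabs_mult, Rabs_inv, (Rabs_pos_eq (ln S)) by lra.
  apply (Rmult_lt_reg_r (ln S)); [lra|].
  rewrite Rmult_assoc, Rinv_l, Rmult_1_r by lra. lra.
Qed.

Lemma log2_div_log2 x y : log2 x / log2 y = ln x / ln y.
Proof.
  unfold log2. assert (Hln2 : 0 < ln 2) by (rewrite <- ln_1; apply ln_increasing; lra).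
  destruct (Req_dec (ln y) 0) as [-> | Hy].
  - unfold Rdiv. rewrite Rmult_0_l, !Rinv_0. ring.
  - field. lra.
Qed.

Theorem lemma2 (alpha : R) (rho_star : R -> R) :
  0 <= alpha ->
  (exists S0 : R, forall S : R, S > S0 ->
     (0 < rho_star S < 1 /\ kramer_poly alpha S (rho_star S) = 0) /\
     (forall r : R, 0 < r < 1 -> kramer_poly alpha S r = 0 -> r = rho_star S)) ->
  forall eps : R, eps > 0 ->
    exists M : R, forall S : R, S > M ->
      Rabs (R_sym alpha S (rho_star S) / log2 S - d_low alpha) < eps.
Proof.
  intros Ha [S0 HS0] eps Heps.
  destruct (ln_ratio_cvg (fun S => kramer_ratio alpha S (rho_star S)) 25 (d_low alpha))
    with (eps := eps) as [M HM]; [lra | | exact Heps |].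
  - exists (Rmax S0 1). intros S HS. apply Rmax_Rlt in HS as [HSS0 HS1].
    destruct (HS0 S HSS0) as [[Hr Hroot] _].
    apply kramer_ratio_within; assumption || lra.
  - exists M. intros S HS.
    change (R_sym alpha S (rho_star S)) with (log2 (kramer_ratio alpha S (rho_star S))).
    rewrite log2_div_log2. exact (HM S HS).
Qed.
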